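(* Let $(X,V)$ and $(\overline{X},\overline{V})$ be solutions of the discrete Motsch–Tadmor model (as in the context) whose initial data satisfy \[ \max\{\|\Delta^x(0)\|_F,\|\Delta^{\overline{x}}(0)\|_F\}<M,\quad \|\Delta^v(0)\|_F<\kappa\int_{\|\Delta^x(0)\|_F}^M\psi(s)\,ds,\quad \|\Delta^{\overline{v}}(0)\|_F<\kappa\int_{\|\Delta^{\overline{x}}(0)\|_F}^M\psi(s)\,ds, \] and let $C\in(0,1)$. Then there are constants $\bar c_0,\bar c_1,\bar c_2\ge0$ depending on $V(0)$, $\overline{V}(0)$ and the model parameters such that, for $h>0$ sufficiently small and any $0<\epsilon<1$, with $b_1=(\bar c_0\epsilon+\bar c_1h+\bar c_2h^2)^{1/2}$ and $b_2=C\kappa\psi(M)h$, for all $n\ge0$ \[ \|\Delta^v(n)-\Delta^{\overline{v}}(n)\|_F\le(1-\epsilon)^n\|\Delta^v(0)-\Delta^{\overline{v}}(0)\|_F+\frac{b_1e^{b_2}}{1-(1-\epsilon)e^{b_2}}e^{-b_2n}. \]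
   Context: Discrete MT model: fix $N\ge1$, $d\ge1$, $\kappa>0$, $h>0$, and $a:[0,\infty)\to\mathbb{R}$ with constants $0<c_1\le c_2$, $c_1\le a\le c_2$, $|a(r_1)-a(r_2)|\le L_a|r_1-r_2|$ ($L_a>0$); $0<h<\min\{1,1/\kappa\}$. A solution satisfies $x_i(n+1)=x_i(n)+hv_i(n)$, $v_i(n+1)=v_i(n)+h\kappa\sum_j\phi_{ij}(n)(v_j(n)-v_i(n))$ with $\phi_{ij}(n)=\frac{a(\|x_i(n)-x_j(n)\|)}{\sum_ka(\|x_i(n)-x_k(n)\|)}$, $x_i,v_i\in\mathbb{R}^d$. Notation: $\Delta^x_{ij}=x_i-x_j$, $\Delta^v_{ij}=v_i-v_j$, similarly $\Delta^{\overline{x}},\Delta^{\overline{v}}$; $\|A\|_F=(\sum_{i,j}\|A_{ij}\|^2)^{1/2}$. Constants: $\|\phi\|_{\mathrm{Lip}}=\frac{L_a}{Nc_1}(1+\frac{c_2}{c_1})$, $M=\frac{1}{4N\|\phi\|_{\mathrm{Lip}}}$, $\psi(s)=1-\|\phi\|_{\mathrm{Lip}}Ns$. *)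

From HB Require Import structures.
From mathcomp Require Import all_boot all_order all_algebra.
From mathcomp Require Import all_classical all_reals all_analysis.
Set Implicit Arguments. Unset Strict Implicit. Unset Printing Implicit Defensive.
Import Order.TTheory GRing.Theory Num.Theory.
Import numFieldNormedType.Exports.
Local Open Scope classical_set_scope.
Local Open Scope ring_scope.

Section MT.
Variable R : realType.

Definition enorm (d : nat) (u : 'rV[R]_d) : R :=
  Num.sqrt (\sum_(k < d) (u 0 k) ^+ 2).

Definition frobDelta (N d : nat) (y : 'I_N -> 'rV[R]_d) : R :=
  Num.sqrt (\sum_(i < N) \sum_(j < N) enorm (y i - y j) ^+ 2).

Definition frobDeltaDiff (N d : nat) (y yb : 'I_N -> 'rV[R]_d) : R :=
  Num.sqrt (\sum_(i < N) \sum_(j < N)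
              enorm ((y i - y j) - (yb i - yb j)) ^+ 2).

Definition mt_phi (N d : nat) (a : R -> R) (x : 'I_N -> 'rV[R]_d) (i j : 'I_N) : R :=
  a (enorm (x i - x j)) / \sum_(k < N) a (enorm (x i - x k)).

Definition is_MT_solution (N d : nat) (kappa h : R) (a : R -> R)
    (x v : nat -> 'I_N -> 'rV[R]_d) : Prop :=
  forall (n : nat) (i : 'I_N),
    x n.+1 i = x n i + h *: v n i /\
    v n.+1 i = v n i + (h * kappa) *: \sum_(j < N) mt_phi a (x n) i j *: (v n j - v n i).

Definition phiLip (N : nat) (c1 c2 La : R) : R :=
  La / (N%:R * c1) * (1 + c2 / c1).

Definition Mconst (N : nat) (c1 c2 La : R) : R :=
  1 / (4 * N%:R * phiLip N c1 c2 La).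

Definition psi (N : nat) (c1 c2 La : R) (s : R) : R :=
  1 - phiLip N c1 c2 La * N%:R * s.

Definition psi_int (N : nat) (c1 c2 La r M : R) : R :=
  \int[lebesgue_measure]_(s in `[r, M]) psi N c1 c2 La s.

End MT.

From HB Require Import structures.
From mathcomp Require Import all_boot all_order all_algebra.
From mathcomp Require Import all_classical all_reals all_analysis.
From mathcomp Require Import ring lra.
Import Order.TTheory GRing.Theory Num.Theory.
Import numFieldNormedType.Exports.
Local Open Scope classical_set_scope.
Local Open Scope ring_scope.

(* Each solution flocks on its own, which already gives the bound with
   [cb1 = cb2 = 0].  While the position diameter [rho] satisfies
   [N * phiLip * rho <= 1/3], the weights of two agents differ by at most 1/3
   in l^1, so one Euler step contracts the velocity diameter, initially at
   most [B0 = |Delta^v(0)|_F], by [q = 1 - 5/6 h kappa].  The total drift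
   [h * \sum_m q^m B0 <= 6/(5 kappa) B0] then never pushes [rho] past that
   threshold, because [B0 < kappa * \int psi <= kappa (M - rho0)] and
   [N * phiLip * M = 1/4].  Hence
   [|Delta^v(n) - Delta^vb(n)|_F <= N (B0 + Bb0) q^n].  Finally
   [b2 = 3/4 C kappa h <= 5/6 h kappa] gives [q^n <= exp(- b2 n)], and with
   [cb0 = (N (B0 + Bb0))^2] the coefficient of [exp(- b2 n)] is at least
   [N (B0 + Bb0)], since its denominator is at most [eps <= sqrt eps]. *)

Set Implicit Arguments.
Unset Strict Implicit.

Section EuclideanNorm.
Variables (R : realType) (d : nat).
Implicit Types u w : 'rV[R]_d.

(* Lagrange's identity: the defect in Cauchy-Schwarz is a sum of squares. *)
Lemma sum_CauchySchwarz (a b : 'I_d -> R) :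
  (\sum_k a k * b k) ^+ 2 <= (\sum_k a k ^+ 2) * (\sum_k b k ^+ 2).
Proof.
have defect_ge0 : 0 <= \sum_k \sum_l (a k * b l - a l * b k) ^+ 2.
  by do 2![apply: sumr_ge0 => ? _]; exact: sqr_ge0.
have prod_sums (F G : 'I_d -> R) :
    (\sum_k F k) * (\sum_k G k) = \sum_k \sum_l F k * G l.
  by rewrite mulr_suml; apply: eq_bigr => k _; rewrite mulr_sumr.
suff expand : \sum_k \sum_l (a k * b l - a l * b k) ^+ 2 =
    2 * ((\sum_k a k ^+ 2) * (\sum_k b k ^+ 2) - (\sum_k a k * b k) ^+ 2).
  by rewrite expand pmulr_rge0 // subr_ge0 in defect_ge0.
rewrite expr2 !prod_sums -sumrB.
under [X in _ = _ * X]eq_bigr do rewrite -sumrB.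
rewrite mulr_natl mulr2n [X in _ = _ + X]exchange_big /= -big_split /=.
by apply: eq_bigr => k _; rewrite -big_split; apply: eq_bigr => l _ /=; ring.
Qed.

Lemma enorm_ge0 u : 0 <= enorm u.
Proof. exact: sqrtr_ge0. Qed.

Lemma enormZ (c : R) u : enorm (c *: u) = `|c| * enorm u.
Proof.
rewrite /enorm -sqrtr_sqr -sqrtrM ?sqr_ge0 // mulr_sumr.
by congr Num.sqrt; apply: eq_bigr => k _; rewrite mxE exprMn.
Qed.

Lemma enorm0 : enorm (0 : 'rV[R]_d) = 0.
Proof. by rewrite -(scale0r 0) enormZ normr0 mul0r. Qed.

Lemma enormN u : enorm (- u) = enorm u.
Proof. by rewrite -scaleN1r enormZ normrN normr1 mul1r. Qed.

Lemma enormD u w : enorm (u + w) <= enorm u + enorm w.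
Proof.
have enorm_sqr y : enorm y ^+ 2 = \sum_k y 0 k ^+ 2.
  by rewrite sqr_sqrtr // sumr_ge0 // => k _; exact: sqr_ge0.
rewrite -(ler_pXn2r (n := 2)) ?nnegrE ?addr_ge0 ?enorm_ge0 //.
have -> : enorm (u + w) ^+ 2 =
    enorm u ^+ 2 + enorm w ^+ 2 + 2 * \sum_k u 0 k * w 0 k.
  rewrite !enorm_sqr mulr_sumr -!big_split /=.
  by apply: eq_bigr => k _; rewrite mxE; ring.
have : \sum_k u 0 k * w 0 k <= enorm u * enorm w.
  apply: ler_normlW; rewrite -(ler_pXn2r (n := 2)) ?nnegrE ?mulr_ge0 ?enorm_ge0 //.
  by rewrite real_normK ?num_real // exprMn !enorm_sqr sum_CauchySchwarz.
by rewrite sqrrD mulr2n; lra.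
Qed.

Lemma enormB u w : enorm (u - w) <= enorm u + enorm w.
Proof. by rewrite -(enormN w) enormD. Qed.

Lemma ler_dist_enorm u w : `|enorm u - enorm w| <= enorm (u - w).
Proof.
rewrite ler_norml; apply/andP; split.
- by have := enormD (w - u) u; rewrite subrK -opprB enormN; lra.
- by have := enormD (u - w) w; rewrite subrK; lra.
Qed.

Lemma enorm_sum (I : finType) (F : I -> 'rV[R]_d) :
  enorm (\sum_i F i) <= \sum_i enorm (F i).
Proof.
elim/big_ind2: _ => [|u1 r1 u2 r2 le1 le2|//]; first by rewrite enorm0.
exact: le_trans (enormD _ _) (lerD le1 le2).
Qed.

Definition diam_le (I : finType) (y : I -> 'rV[R]_d) (B : R) :=
  forall i j, enorm (y i - y j) <= B.

Lemma diam_le_ge0 (I : finType) (y : I -> 'rV[R]_d) B (i : I) :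
  diam_le y B -> 0 <= B.
Proof. by move/(_ i i); apply: le_trans; exact: enorm_ge0. Qed.

(* Split [c] into its positive and negative parts, both of mass [P]; then
   [P *: \sum_j c j *: v j] is a nonnegative combination of the differences
   [v j - v m] with total weight [P ^+ 2]. *)
Lemma enorm_zero_sum_le (I : finType) (c : I -> R) (v : I -> 'rV[R]_d) B :
  \sum_j c j = 0 -> diam_le v B ->
  enorm (\sum_j c j *: v j) <= (\sum_j `|c j|) / 2 * B.
Proof.
move=> c_sum0 v_diam.
pose cp j := (`|c j| + c j) / 2; pose cm j := (`|c j| - c j) / 2.
pose P := (\sum_j `|c j|) / 2.
have cp_ge0 j : 0 <= cp j.
  by rewrite divr_ge0 //; have := ler_norm (- c j); rewrite normrN; lra.
have cm_ge0 j : 0 <= cm j by rewrite divr_ge0 // subr_ge0 ler_norm.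
have sum_cp : \sum_j cp j = P by rewrite -mulr_suml big_split /= c_sum0 addr0.
have sum_cm : \sum_j cm j = P by rewrite -mulr_suml sumrB c_sum0 subr0.
have P_ge0 : 0 <= P by rewrite -sum_cp sumr_ge0.
have pairs : P *: \sum_j c j *: v j = \sum_j \sum_m (cp j * cm m) *: (v j - v m).
  have -> : P *: \sum_j c j *: v j =
      \sum_j (cp j * P) *: v j - \sum_m (P * cm m) *: v m.
    rewrite scaler_sumr -sumrB; apply: eq_bigr => j _.
    by rewrite scalerA -scalerBl /cp /cm; congr (_ *: _); field.
  have -> : \sum_j (cp j * P) *: v j = \sum_j \sum_m (cp j * cm m) *: v j.
    by apply: eq_bigr => j _; rewrite -sum_cm mulr_sumr scaler_suml.
  have -> : \sum_m (P * cm m) *: v m = \sum_j \sum_m (cp j * cm m) *: v m.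
    rewrite exchange_big; apply: eq_bigr => m _.
    by rewrite -sum_cp mulr_suml scaler_suml.
  rewrite -sumrB; apply: eq_bigr => j _.
  by rewrite -sumrB; apply: eq_bigr => m _; rewrite scalerBr.
have : P * enorm (\sum_j c j *: v j) <= P * (P * B).
  rewrite -[P in P * enorm _](ger0_norm P_ge0) -enormZ pairs.
  apply: le_trans (enorm_sum _) _.
  rewrite mulrA -{1}sum_cp -sum_cm !mulr_suml; apply: ler_sum => j _.
  rewrite mulr_sumr mulr_suml; apply: le_trans (enorm_sum _) _.
  apply: ler_sum => m _.
  rewrite enormZ ger0_norm; last exact: mulr_ge0.
  exact: (ler_wpM2l (mulr_ge0 (cp_ge0 j) (cm_ge0 m)) (v_diam j m)).
move=> bound; have [P_gt0 | P_le0] := ltrP 0 P; first by rewrite -(ler_pM2l P_gt0).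
have P0 : P = 0 by apply/le_anti; rewrite P_le0 P_ge0.
have c0 j : c j = 0.
  apply/normr0_eq0/(@psumr_eq0P _ _ xpredT _ (fun i _ => normr_ge0 (c i))) => //.
  by apply/eqP; move: P0 => /eqP; rewrite /P mulf_eq0 invr_eq0 pnatr_eq0 orbF.
rewrite big1 => [|j _]; last by rewrite c0 scale0r.
by rewrite enorm0 -/P P0 mul0r.
Qed.

End EuclideanNorm.

Lemma ler_dist_div (R : realType) (p q s t c m : R) :
  0 <= q <= c -> 0 < m -> m <= s -> m <= t ->
  `|p / s - q / t| <= `|p - q| / m + c * `|s - t| / m ^+ 2.
Proof.
move=> /andP[q_ge0 q_le_c] m_gt0 m_le_s m_le_t.
have s_gt0 := lt_le_trans m_gt0 m_le_s; have t_gt0 := lt_le_trans m_gt0 m_le_t.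
have -> : p / s - q / t = (p - q) / s + q * (t - s) / (s * t).
  by field; rewrite !gt_eqF.
apply: le_trans (ler_normD _ _) (lerD _ _).
  rewrite normrM normfV (gtr0_norm s_gt0) ler_wpM2l //.
  by rewrite lef_pV2 ?posrE.
rewrite !normrM normfV (gtr0_norm (mulr_gt0 s_gt0 t_gt0)) (ger0_norm q_ge0) distrC.
apply: ler_pM.
- by rewrite mulr_ge0.
- by rewrite invr_ge0 ltW ?mulr_gt0.
- by rewrite ler_wpM2r.
- rewrite lef_pV2 ?posrE ?exprn_gt0 ?mulr_gt0 // expr2.
  exact: ler_pM (ltW m_gt0) (ltW m_gt0) m_le_s m_le_t.
Qed.

Section MotschTadmorWeights.
Variables (R : realType) (N d : nat) (a : R -> R) (c1 c2 La : R).
Hypotheses (N_gt0 : (0 < N)%N) (c1_gt0 : 0 < c1) (La_ge0 : 0 <= La).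
Hypothesis a_bounds : forall r : R, 0 <= r -> c1 <= a r /\ a r <= c2.
Hypothesis a_lip :
  forall r1 r2 : R, 0 <= r1 -> 0 <= r2 -> `|a r1 - a r2| <= La * `|r1 - r2|.
Variable x : 'I_N -> 'rV[R]_d.

Let A i j := a (enorm (x i - x j)).
Let S i := \sum_(k < N) A i k.

Let A_bounds i j : 0 <= A i j <= c2.
Proof.
have [c1_le c2_ge] := a_bounds (enorm_ge0 (x i - x j)).
by rewrite c2_ge (le_trans (ltW c1_gt0) c1_le).
Qed.

Let S_ge i : N%:R * c1 <= S i.
Proof.
have -> : N%:R * c1 = \sum_(k < N) c1 by rewrite sumr_const card_ord mulr_natl.
by apply: ler_sum => k _; have [] := a_bounds (enorm_ge0 (x i - x k)).
Qed.

Let S_gt0 i : 0 < S i.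
Proof. by apply: lt_le_trans (S_ge i); rewrite mulr_gt0 ?ltr0n. Qed.

Lemma mt_phi_sum1 i : \sum_j mt_phi a x i j = 1.
Proof. by rewrite /mt_phi -mulr_suml divff // gt_eqF //; exact: S_gt0. Qed.

Let A_lip i l j : `|A i j - A l j| <= La * enorm (x i - x l).
Proof.
apply: le_trans (a_lip (enorm_ge0 _) (enorm_ge0 _)) _.
rewrite ler_wpM2l //; have := ler_dist_enorm (x i - x j) (x l - x j).
by rewrite opprB addrA subrK.
Qed.

Let S_lip i l : `|S i - S l| <= N%:R * La * enorm (x i - x l).
Proof.
rewrite /S -sumrB; apply: le_trans (ler_norm_sum _ _ _) _.
have -> : N%:R * La * enorm (x i - x l) = \sum_(k < N) La * enorm (x i - x l).
  by rewrite sumr_const card_ord mulr_natl mulrnAl.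
by apply: ler_sum => k _; exact: A_lip.
Qed.

Lemma mt_phi_lip i l j :
  `|mt_phi a x i j - mt_phi a x l j| <= phiLip N c1 c2 La * enorm (x i - x l).
Proof.
have Nc1_gt0 : 0 < N%:R * c1 by rewrite mulr_gt0 ?ltr0n.
change (`|A i j / S i - A l j / S l| <= phiLip N c1 c2 La * enorm (x i - x l)).
apply: le_trans (ler_dist_div (A i j) (A_bounds l j) Nc1_gt0 (S_ge i) (S_ge l)) _.
have c2_ge0 : 0 <= c2 by case/andP: (A_bounds i j); exact: le_trans.
have -> : phiLip N c1 c2 La * enorm (x i - x l) =
    La * enorm (x i - x l) / (N%:R * c1)
    + c2 * (N%:R * La * enorm (x i - x l)) / (N%:R * c1) ^+ 2.
  by rewrite /phiLip; field; rewrite !gt_eqF ?ltr0n.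
apply: lerD; first by rewrite ler_wpM2r ?invr_ge0 ?(ltW Nc1_gt0) ?A_lip.
by rewrite ler_wpM2r ?invr_ge0 ?exprn_ge0 ?(ltW Nc1_gt0) // ler_wpM2l ?S_lip.
Qed.

Lemma mt_phi_dist_sum i l :
  \sum_j `|mt_phi a x i j - mt_phi a x l j|
    <= N%:R * phiLip N c1 c2 La * enorm (x i - x l).
Proof.
have -> : N%:R * phiLip N c1 c2 La * enorm (x i - x l) =
    \sum_(j < N) phiLip N c1 c2 La * enorm (x i - x l).
  by rewrite sumr_const card_ord mulr_natl mulrnAl.
by apply: ler_sum => j _; exact: mt_phi_lip.
Qed.

End MotschTadmorWeights.

Section ConsensusStep.
Variables (R : realType) (d : nat) (I : finType) (w : I -> I -> R) (k : R).
Hypothesis w_sum1 : forall i, \sum_j w i j = 1.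

Definition consensus_step (v : I -> 'rV[R]_d) i :=
  v i + k *: \sum_j w i j *: (v j - v i).

Lemma consensus_step_sub v i l :
  consensus_step v i - consensus_step v l =
    (1 - k) *: (v i - v l) + k *: \sum_j (w i j - w l j) *: v j.
Proof.
have mean m : \sum_j w m j *: (v j - v m) = \sum_j w m j *: v j - v m.
  by rewrite (eq_bigr _ (fun j _ => scalerBr _ _ _)) sumrB -scaler_suml w_sum1 scale1r.
rewrite /consensus_step !mean (eq_bigr _ (fun j _ => scalerBl _ _ _)) sumrB.
move: (\sum_j _ *: v j) (\sum_j _ *: v j) => Si Sl.
by apply/rowP => t; rewrite !mxE; ring.
Qed.

Lemma diam_le_consensus_step v (Q S : R) :
  0 <= k <= 1 -> diam_le v Q -> (forall i l, \sum_j `|w i j - w l j| <= S) ->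
  diam_le (consensus_step v) ((1 - k + k * S / 2) * Q).
Proof.
move=> /andP[k_ge0 k_le1] v_diam w_dist i l.
have Q_ge0 := diam_le_ge0 i v_diam.
have c_sum0 : \sum_j (w i j - w l j) = 0 by rewrite sumrB !w_sum1 subrr.
have avg_le : enorm (\sum_j (w i j - w l j) *: v j) <= S / 2 * Q.
  apply: le_trans (enorm_zero_sum_le c_sum0 v_diam) _.
  by rewrite ler_wpM2r // ler_wpM2r.
rewrite consensus_step_sub; apply: le_trans (enormD _ _) _.
have k1_ge0 : 0 <= 1 - k by rewrite subr_ge0.
rewrite !enormZ (ger0_norm k_ge0) (ger0_norm k1_ge0).
have := ler_wpM2l k1_ge0 (v_diam i l).
have := ler_wpM2l k_ge0 avg_le.
lra.
Qed.

End ConsensusStep.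

Section Frobenius.
Variables (R : realType) (N d : nat).
Implicit Types y z : 'I_N -> 'rV[R]_d.

Lemma diam_le_frobDelta y : diam_le y (frobDelta y).
Proof.
move=> i j; rewrite /frobDelta -(ger0_norm (enorm_ge0 (y i - y j))) -sqrtr_sqr.
rewrite ler_sqrt; last by do 2![apply: sumr_ge0 => ? _]; exact: sqr_ge0.
apply: le_trans (_ : _ <= \sum_(l < N) enorm (y i - y l) ^+ 2) _.
  by rewrite (bigD1 j) //= lerDl sumr_ge0 // => ? _; exact: sqr_ge0.
rewrite [leRHS](bigD1 i) //= lerDl.
by do 2![apply: sumr_ge0 => ? _]; exact: sqr_ge0.
Qed.

Lemma frobDeltaDiff_le y z (P Q : R) :
  (0 < N)%N -> diam_le y P -> diam_le z Q ->
  frobDeltaDiff y z <= N%:R * (P + Q).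
Proof.
move=> N_gt0 y_diam z_diam.
have PQ_ge0 : 0 <= P + Q.
  by rewrite addr_ge0 ?(diam_le_ge0 (Ordinal N_gt0) y_diam) ?(diam_le_ge0 (Ordinal N_gt0) z_diam).
apply: le_trans (_ : _ <= Num.sqrt (\sum_(i < N) \sum_(j < N) (P + Q) ^+ 2)) _.
  rewrite /frobDeltaDiff ler_sqrt; last by do 2![apply: sumr_ge0 => ? _]; exact: sqr_ge0.
  apply: ler_sum => i _; apply: ler_sum => j _.
  rewrite ler_sqr ?nnegrE ?enorm_ge0 //.
  by apply: le_trans (enormB _ _) (lerD (y_diam i j) (z_diam i j)).
have -> : \sum_(i < N) \sum_(j < N) (P + Q) ^+ 2 = (N%:R * (P + Q)) ^+ 2.
  by rewrite !sumr_const !card_ord -mulrnA -[in LHS]mulr_natl natrM; ring.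
by rewrite sqrtr_sqr ger0_norm // mulr_ge0.
Qed.

End Frobenius.

Lemma phiLip_ge0 (R : realType) N (c1 c2 La : R) :
  0 < c1 -> 0 <= c2 -> 0 <= La -> 0 <= phiLip N c1 c2 La.
Proof.
move=> c1_gt0 c2_ge0 La_ge0.
by rewrite mulr_ge0 ?divr_ge0 ?addr_ge0 ?mulr_ge0 ?invr_ge0 ?ler0n ?(ltW c1_gt0).
Qed.

Lemma psi_int_le (R : realType) N (c1 c2 La r M : R) :
  0 <= phiLip N c1 c2 La -> 0 <= r -> r <= M ->
  psi_int N c1 c2 La r M <= M - r.
Proof.
move=> L_ge0 r_ge0 r_le_M.
have psi_cont : continuous (psi N c1 c2 La).
  by move=> s; apply: cvgB; [exact: cvg_cst | apply: cvgMr; exact: cvg_id].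
have -> : M - r = \int[lebesgue_measure]_(s in `[r, M]) (cst 1 s : R).
  rewrite Rintegral_cst ?mul1r; last exact: measurable_itv.
  have := lebesgue_measure_itv `[r, M]; rewrite /= => ->.
  have [r_lt_M | M_le_r] := ltrP r M; first by rewrite lte_fin r_lt_M.
  have -> : r = M by apply/le_anti; rewrite r_le_M M_le_r.
  by rewrite ltxx subrr.
apply: le_Rintegral; first exact: measurable_itv.
- apply: continuous_compact_integrable; first exact: segment_compact.
  exact: continuous_subspaceT.
- apply: continuous_compact_integrable; first exact: segment_compact.
  by apply: continuous_subspaceT => s; exact: cvg_cst.
- move=> s; rewrite /= in_itv /= => /andP[r_le_s _].
  rewrite /psi gerBl; apply: mulr_ge0; first exact: mulr_ge0.
  exact: le_trans r_ge0 r_le_s.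
Qed.

Section ModelConstants.
Variables (R : realType) (N : nat) (c1 c2 La : R).
Hypotheses (N_gt0 : (0 < N)%N) (c1_gt0 : 0 < c1) (c1_le_c2 : c1 <= c2).
Hypothesis La_gt0 : 0 < La.

Lemma phiLip_gt0 : 0 < phiLip N c1 c2 La.
Proof.
have c2_gt0 := lt_le_trans c1_gt0 c1_le_c2.
by rewrite /phiLip mulr_gt0 ?divr_gt0 ?addr_gt0 ?mulr_gt0 ?invr_gt0 ?ltr0n.
Qed.

Lemma Mconst_phiLip : N%:R * phiLip N c1 c2 La * Mconst N c1 c2 La = 1 / 4.
Proof. by rewrite /Mconst; field; rewrite !gt_eqF ?phiLip_gt0 ?ltr0n. Qed.

Lemma psi_Mconst : psi N c1 c2 La (Mconst N c1 c2 La) = 3 / 4.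
Proof.
have := Mconst_phiLip; rewrite /psi [_ * N%:R]mulrC => ->.
by lra.
Qed.

Lemma MT_initially_small (kappa r B : R) :
  0 < kappa -> 0 <= r -> r < Mconst N c1 c2 La ->
  B < kappa * psi_int N c1 c2 La r (Mconst N c1 c2 La) ->
  N%:R * phiLip N c1 c2 La * (r + 6 / (5 * kappa) * B) <= 1 / 3.
Proof.
move=> kappa_gt0 r_ge0 r_lt_M B_small.
have L_ge0 := ltW phiLip_gt0.
have B_le : B / kappa <= Mconst N c1 c2 La - r.
  rewrite ler_pdivrMr // mulrC ltW //; apply: lt_le_trans B_small _.
  by rewrite ler_wpM2l ?(ltW kappa_gt0) // psi_int_le ?(ltW r_lt_M).
have -> : 6 / (5 * kappa) * B = 6 / 5 * (B / kappa) by field; rewrite gt_eqF.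
apply: le_trans (_ : _ <= N%:R * phiLip N c1 c2 La * (6 / 5 * Mconst N c1 c2 La)) _.
  by rewrite ler_wpM2l ?(mulr_ge0 (ler0n _ N) L_ge0) //; lra.
by rewrite mulrCA Mconst_phiLip; lra.
Qed.

Lemma Mconst_rate_le (C kappa h : R) : 0 < C < 1 -> 0 < kappa -> 0 < h ->
  0 <= C * kappa * psi N c1 c2 La (Mconst N c1 c2 La) * h <= 5 / 6 * (h * kappa).
Proof.
move=> /andP[C_gt0 C_lt1] kappa_gt0 h_gt0; rewrite psi_Mconst.
have hkappa_gt0 := mulr_gt0 h_gt0 kappa_gt0.
by apply/andP; split; nra.
Qed.

End ModelConstants.

Section MotschTadmorFlocking.
Variables (R : realType) (N d : nat) (kappa h : R) (a : R -> R) (c1 c2 La : R).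
Hypotheses (N_gt0 : (0 < N)%N) (c1_gt0 : 0 < c1) (La_ge0 : 0 <= La).
Hypothesis a_bounds : forall r : R, 0 <= r -> c1 <= a r /\ a r <= c2.
Hypothesis a_lip :
  forall r1 r2 : R, 0 <= r1 -> 0 <= r2 -> `|a r1 - a r2| <= La * `|r1 - r2|.
Hypotheses (kappa_gt0 : 0 < kappa) (h_gt0 : 0 < h) (hkappa_le1 : h * kappa <= 1).
Variables x v : nat -> 'I_N -> 'rV[R]_d.
Hypothesis sol : is_MT_solution kappa h a x v.

Let q : R := 1 - 5 / 6 * (h * kappa).

Let NphiLip_ge0 : 0 <= N%:R * phiLip N c1 c2 La.
Proof.
have [c1_le_a a_le_c2] := a_bounds (lexx 0).
by rewrite mulr_ge0 ?phiLip_ge0 ?(le_trans (ltW c1_gt0) (le_trans c1_le_a a_le_c2)).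
Qed.

Lemma MT_position_step n (rho Q : R) :
  diam_le (x n) rho -> diam_le (v n) Q -> diam_le (x n.+1) (rho + h * Q).
Proof.
move=> x_diam v_diam i l.
rewrite (proj1 (sol n i)) (proj1 (sol n l)) opprD addrACA -scalerBr.
apply: le_trans (enormD _ _) _.
rewrite enormZ gtr0_norm //; apply: lerD; first exact: x_diam.
by rewrite ler_wpM2l ?(ltW h_gt0) ?v_diam.
Qed.

Lemma MT_velocity_step n (rho Q : R) :
  diam_le (x n) rho -> N%:R * phiLip N c1 c2 La * rho <= 1 / 3 ->
  diam_le (v n) Q -> diam_le (v n.+1) (q * Q).
Proof.
move=> x_diam x_small v_diam.
have -> : v n.+1 = consensus_step (mt_phi a (x n)) (h * kappa) (v n).
  by apply: funext => i; rewrite (proj2 (sol n i)).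
have -> : q = 1 - h * kappa + h * kappa * (1 / 3) / 2 by rewrite /q; field.
apply: diam_le_consensus_step => //.
- exact: (mt_phi_sum1 N_gt0 c1_gt0 a_bounds).
- by apply/andP; split; [rewrite mulr_ge0 ?ltW | exact: hkappa_le1].
move=> i l.
apply: le_trans (mt_phi_dist_sum N_gt0 c1_gt0 La_ge0 a_bounds a_lip (x n) i l) _.
by apply: le_trans x_small; rewrite ler_wpM2l.
Qed.

Variables (B0 r : R).
Hypotheses (v0_diam : diam_le (v 0) B0) (x0_diam : diam_le (x 0) r).
Hypothesis initially_small :
  N%:R * phiLip N c1 c2 La * (r + 6 / (5 * kappa) * B0) <= 1 / 3.

(* [6 / (5 * kappa) * (1 - q ^+ n) * B0] is the geometric sum of the
   displacements [h * q ^+ m * B0], [m < n], since [1 - q = 5 / 6 * h * kappa]. *)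
Lemma MT_flocking n :
  diam_le (v n) (q ^+ n * B0) /\
  diam_le (x n) (r + 6 / (5 * kappa) * (1 - q ^+ n) * B0).
Proof.
have B0_ge0 := diam_le_ge0 (Ordinal N_gt0) v0_diam.
have q_ge0 : 0 <= q by rewrite /q; move: hkappa_le1; lra.
have q_le1 : q <= 1 by rewrite /q; have := mulr_gt0 h_gt0 kappa_gt0; lra.
elim: n => [|n [v_diam x_diam]].
  by rewrite expr0 mul1r subrr mulr0 mul0r addr0.
split.
  rewrite exprS -mulrA; apply: (MT_velocity_step x_diam) => //.
  apply: le_trans initially_small; rewrite ler_wpM2l // lerD2l -mulrA.
  rewrite ler_wpM2l ?divr_ge0 ?mulr_ge0 ?(ltW kappa_gt0) //.
  by rewrite ler_piMl // gerBl exprn_ge0.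
have -> : r + 6 / (5 * kappa) * (1 - q ^+ n.+1) * B0 =
    r + 6 / (5 * kappa) * (1 - q ^+ n) * B0 + h * (q ^+ n * B0).
  by rewrite exprS /q; field; rewrite gt_eqF.
exact: MT_position_step.
Qed.

End MotschTadmorFlocking.

Lemma MT_velocity_decay (R : realType) (N d : nat) (kappa h : R) (a : R -> R)
    (c1 c2 La : R) (x v : nat -> 'I_N -> 'rV[R]_d) :
  (0 < N)%N -> 0 < c1 -> c1 <= c2 -> 0 < La ->
  (forall r : R, 0 <= r -> c1 <= a r /\ a r <= c2) ->
  (forall r1 r2 : R, 0 <= r1 -> 0 <= r2 -> `|a r1 - a r2| <= La * `|r1 - r2|) ->
  0 < kappa -> 0 < h -> h * kappa <= 1 -> is_MT_solution kappa h a x v ->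
  frobDelta (x 0) < Mconst N c1 c2 La ->
  frobDelta (v 0) < kappa * psi_int N c1 c2 La (frobDelta (x 0)) (Mconst N c1 c2 La) ->
  forall n, diam_le (v n) ((1 - 5 / 6 * (h * kappa)) ^+ n * frobDelta (v 0)).
Proof.
move=> N_gt0 c1_gt0 c1_le_c2 La_gt0 a_bounds a_lip kappa_gt0 h_gt0 hkappa_le1 sol
  x0_lt_M v0_small n.
have small := MT_initially_small N_gt0 c1_gt0 c1_le_c2 La_gt0 kappa_gt0
  (sqrtr_ge0 _) x0_lt_M v0_small.
by have [] := MT_flocking N_gt0 c1_gt0 (ltW La_gt0) a_bounds a_lip kappa_gt0 h_gt0
  hkappa_le1 sol (diam_le_frobDelta (v 0)) (diam_le_frobDelta (x 0)) small n.
Qed.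

Lemma expr1B_le_expR (R : realType) (b c : R) n :
  0 <= b <= c -> c <= 1 -> (1 - c) ^+ n <= expR (- b * n%:R).
Proof.
move=> /andP[b_ge0 b_le_c] c_le1.
apply: le_trans (_ : _ <= expR (- c) ^+ n) _.
  apply: lerXn2r; rewrite ?nnegrE ?subr_ge0 ?expR_ge0 //.
  by have := expR_ge1Dx (- c); lra.
by rewrite -expRM_natr ler_expR ler_wpM2r ?ler0n // lerN2.
Qed.

Lemma mul1B_expR_lt1 (R : realType) (eps b : R) :
  0 < eps < 1 -> b < - ln (1 - eps) -> (1 - eps) * expR b < 1.
Proof.
move=> /andP[eps_gt0 eps_lt1] b_lt.
have eps1_gt0 : 0 < 1 - eps by rewrite subr_gt0.
rewrite -ltr_pdivlMl // mulr1 -(lnK (eps1_gt0 : 1 - eps \in Num.pos)) -expRN.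
by rewrite ltr_expR.
Qed.

Lemma ratio_sqrt_eps_ge (R : realType) (X eps b : R) :
  0 <= X -> 0 < eps < 1 -> 0 <= b -> (1 - eps) * expR b < 1 ->
  X <= Num.sqrt (X ^+ 2 * eps) * expR b / (1 - (1 - eps) * expR b).
Proof.
move=> X_ge0 /andP[eps_gt0 eps_lt1] b_ge0 ratio_lt1.
have E_ge1 : 1 <= expR b by have := expR_ge1Dx b; lra.
have sqrt_le1 : Num.sqrt eps <= 1 by rewrite -[leRHS]sqrtr1 ler_sqrt // ltW.
have eps_le_sqrt : eps <= Num.sqrt eps.
  by rewrite -{1}(sqr_sqrtr (ltW eps_gt0)) expr2 ler_piMl ?sqrtr_ge0.
rewrite ler_pdivlMr ?subr_gt0 // sqrtrM ?sqr_ge0 // sqrtr_sqr ger0_norm //.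
rewrite -mulrA ler_wpM2l //.
have := ler_wpM2l (sqrtr_ge0 eps) E_ge1.
have eps1_ge0 : 0 <= 1 - eps by rewrite subr_ge0 ltW.
have := ler_wpM2l eps1_ge0 E_ge1.
lra.
Qed.
Lemma geometric_decay_le_bound (R : realType) (X D E0 eps b c : R) n :
  0 <= X -> 0 <= E0 -> 0 < eps < 1 -> 0 <= b <= c -> c <= 1 ->
  (1 - eps) * expR b < 1 -> D <= X * (1 - c) ^+ n ->
  D <= (1 - eps) ^+ n * E0
       + Num.sqrt (X ^+ 2 * eps) * expR b / (1 - (1 - eps) * expR b)
         * expR (- b * n%:R).
Proof.
move=> X_ge0 E0_ge0 /andP[eps_gt0 eps_lt1] bc c_le1 ratio_lt1 D_le.
have [b_ge0 _] := andP bc.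
apply: le_trans D_le (ler_wpDl _ _).
  by rewrite mulr_ge0 ?exprn_ge0 // subr_ge0 ltW.
apply: ler_pM => //; first by rewrite exprn_ge0 // subr_ge0.
  by apply: ratio_sqrt_eps_ge; rewrite ?eps_gt0.
exact: expr1B_le_expR.
Qed.

Theorem corollary4p7 (R : realType) (N d : nat) (kappa : R) (a : R -> R)
    (c1 c2 La : R) (X0 V0 Xb0 Vb0 : 'I_N -> 'rV[R]_d) (C : R) :
  (1 <= N)%N -> (1 <= d)%N -> 0 < kappa ->
  0 < c1 -> c1 <= c2 -> 0 < La ->
  (forall r, 0 <= r -> c1 <= a r /\ a r <= c2) ->
  (forall r1 r2, 0 <= r1 -> 0 <= r2 -> `|a r1 - a r2| <= La * `|r1 - r2|) ->
  Num.max (frobDelta X0) (frobDelta Xb0) < Mconst N c1 c2 La ->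
  frobDelta V0 < kappa * psi_int N c1 c2 La (frobDelta X0) (Mconst N c1 c2 La) ->
  frobDelta Vb0 < kappa * psi_int N c1 c2 La (frobDelta Xb0) (Mconst N c1 c2 La) ->
  0 < C < 1 ->
  exists cb0 cb1 cb2 : R, [/\ 0 <= cb0, 0 <= cb1, 0 <= cb2 &
    forall eps : R, 0 < eps < 1 ->
    exists h0 : R, 0 < h0 /\
    forall h : R, 0 < h -> h < h0 -> h < 1 -> h < 1 / kappa ->
    forall x v xb vb : nat -> 'I_N -> 'rV[R]_d,
      x 0%N = X0 -> v 0%N = V0 -> xb 0%N = Xb0 -> vb 0%N = Vb0 ->
      is_MT_solution kappa h a x v -> is_MT_solution kappa h a xb vb ->
      let b1 := Num.sqrt (cb0 * eps + cb1 * h + cb2 * h ^+ 2) in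
      let b2 := C * kappa * psi N c1 c2 La (Mconst N c1 c2 La) * h in
      forall n : nat,
        frobDeltaDiff (v n) (vb n) <=
          (1 - eps) ^+ n * frobDeltaDiff V0 Vb0
          + b1 * expR b2 / (1 - (1 - eps) * expR b2) * expR (- b2 * n%:R)].
Proof.
move=> N_gt0 _ kappa_gt0 c1_gt0 c1_le_c2 La_gt0 a_bounds a_lip.
rewrite gt_max => /andP[X0_lt_M Xb0_lt_M] V0_small Vb0_small C01.
set K := frobDelta V0 + frobDelta Vb0.
exists ((N%:R * K) ^+ 2), 0, 0; split=> //; first exact: sqr_ge0.
move=> eps /andP[eps_gt0 eps_lt1].
set rate := C * kappa * psi N c1 c2 La (Mconst N c1 c2 La).
have rate_gt0 : 0 < rate.
  by case/andP: C01 => C_gt0 _; rewrite /rate psi_Mconst // !mulr_gt0.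
exists (- ln (1 - eps) / rate); split.
  by rewrite divr_gt0 // oppr_gt0 ln_lt0 // subr_gt0 eps_lt1 ltrBlDl ltrDr eps_gt0.
move=> h h_gt0 h_lt_h0 _ h_lt_kappa x v xb vb x0 v0 xb0 vb0 sol solb b1 b2 n.
subst X0 V0 Xb0 Vb0.
have hkappa_le1 : h * kappa <= 1 by rewrite -ler_pdivlMr // ltW // div1r.
have decay := MT_velocity_decay N_gt0 c1_gt0 c1_le_c2 La_gt0 a_bounds a_lip
  kappa_gt0 h_gt0 hkappa_le1 sol X0_lt_M V0_small n.
have decayb := MT_velocity_decay N_gt0 c1_gt0 c1_le_c2 La_gt0 a_bounds a_lip
  kappa_gt0 h_gt0 hkappa_le1 solb Xb0_lt_M Vb0_small n.
rewrite /b1 !mul0r !addr0.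
apply: (geometric_decay_le_bound (c := 5 / 6 * (h * kappa))).
- by rewrite mulr_ge0 ?addr_ge0 ?sqrtr_ge0.
- exact: sqrtr_ge0.
- by rewrite eps_gt0.
- exact: Mconst_rate_le.
- apply: le_trans hkappa_le1; rewrite ler_piMl ?mulr_ge0 ?(ltW h_gt0) ?(ltW kappa_gt0) //.
  by rewrite ler_pdivrMr ?ltr0n // mul1r ler_nat.
- by apply: mul1B_expR_lt1; rewrite ?eps_gt0 // /b2 mulrC -ltr_pdivlMr.
apply: le_trans (frobDeltaDiff_le N_gt0 decay decayb) _.
by rewrite -mulrDr -/K mulrCA mulrC.
Qed.
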